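(* Let $G$ be a graph of order $p$ with $1\le\delta(G)\le p-2$. If $G$ has a $d$-sequence $\{\mathcal G_i\}_{i=1}^s$ such that $z_i(G)\ge 0$ for all $2\le i\le s$, then $str(G)\le p+d_G$. Moreover, equality holds if $d_G=\delta(G)$.
   Context: For a graph $G$ of order $p$, a numbering of $G$ is a bijection $f:V(G)\to[1,p]$ ($[a,b]$ is the set of integers from $a$ to $b$). The strength of a numbering $f$ is $str_f(G)=\max\{f(u)+f(v): uv\in E(G)\}$, and $str(G)=\min\{str_f(G): f \text{ a numbering of } G\}$. $\delta(G)$ denotes the minimum degree; $G+H$ denotes disjoint union; $mK_1$ is the edgeless graph on $m$ vertices; $K_r$ the complete graph. $d$-sequence: Let $G$ have order $p$ with $1\le\delta(G)\le p-2$. Set $\mathcal G_1=G_1=G$, $m_1=0$. For each $i$, write $\mathcal G_i=m_iK_1+G_i$, where $m_i\ge0$ is the number of isolated vertices of $\mathcal G_i$ and $G_i$ has no isolated vertices. If $\mathcal G_i$ is neither of the form $mK_1$ ($m\ge1$) nor $mK_1+K_r$ ($m\ge0$, $r\ge2$), choose any vertex $u_i$ of $G_i$, put $d_i=\deg_{G_i}(u_i)$, and let $\mathcal G_{i+1}$ be obtained from $G_i$ by deleting $u_i$ together with all its neighbours in $G_i$. Stop at the first index $s$ ($s\ge 2$) for which $\mathcal G_s$ is $m_sK_1$ with $m_s\ge1$ (then set $d_s=0$) or $m_sK_1+K_r$ with $m_s\ge0$, $r\ge2$ (then $d_s=r-1$). The sequence $\{\mathcal G_i\}_{i=1}^s$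 is a $d$-sequence of $G$. Write $d_G=d_1$, $y_j(G)=m_j+1-d_j$ and $z_i(G)=\sum_{j=2}^i y_j(G)$ for $2\le i\le s$. *)

(* A graph is a symmetric irreflexive relation e on a finType T;
   its order is p = #|T|. *)
From mathcomp Require Import all_boot all_order all_algebra.
Set Implicit Arguments. Unset Strict Implicit. Unset Printing Implicit Defensive.
Import GRing.Theory Num.Theory.

Section Graph.
Variable T : finType.
Variable e : rel T.

Definition simple_graph := symmetric e /\ irreflexive e.

(* A numbering f : V -> [1,p] is encoded as an injective (hence bijective)
   finite function f : V -> 'I_p ; the number of vertex v is (f v).+1. *)
Definition is_numbering (f : {ffun T -> 'I_#|T|}) : bool := injectiveb f.

(* str_f(G) = max { f(u) + f(v) : uv in E(G) }  (0 if no edge). *)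
Definition strength_of (f : {ffun T -> 'I_#|T|}) : nat :=
  \max_(u : T) \max_(v : T | e u v) ((f u).+1 + (f v).+1).

Definition str_pred : pred nat :=
  fun n => [exists f : {ffun T -> 'I_#|T|}, is_numbering f && (strength_of f == n)].

Lemma str_exists : exists n, str_pred n.
Proof.
exists (strength_of [ffun x => enum_rank x]).
apply/existsP; exists [ffun x => enum_rank x]; rewrite eqxx andbT.
apply/injectiveP => x y; rewrite !ffunE; exact: enum_rank_inj.
Qed.

Definition str : nat := ex_minn str_exists.

Definition deg_in (S : {set T}) (u : T) : nat := #|[set w in S | e u w]|.

Definition min_degree : nat := \big[minn/#|T|]_(v : T) deg_in setT v.

(* ---------- d-sequences ----------
   A graph script{G}_i is represented by its vertex set S (induced subgraph
   G[S]). *)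
Definition iso (S : {set T}) : {set T} := [set v in S | [forall w in S, ~~ e v w]].
(* vertex set of G_i : G[S] minus its isolated vertices *)
Definition core (S : {set T}) : {set T} := S :\: iso S.
Definition miso (S : {set T}) : nat := #|iso S|.
Definition dcore (S : {set T}) (u : T) : nat := deg_in (core S) u.
Definition dnext (S : {set T}) (u : T) : {set T} :=
  core S :\: (u |: [set w in core S | e u w]).

(* script{G} = m K_1 with m >= 1 *)
Definition is_mK1 (S : {set T}) : bool := (0 < #|S|) && (core S == set0).
(* script{G} = m K_1 + K_r with m >= 0, r >= 2 *)
Definition is_mK1Kr (S : {set T}) : bool :=
  (2 <= #|core S|) &&
  [forall v in core S, forall w in core S, (v != w) ==> e v w].
Definition terminal (S : {set T}) : bool := is_mK1 S || is_mK1Kr S.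
Definition dterm (S : {set T}) : nat := if is_mK1 S then 0 else #|core S| - 1.

(* A d-sequence is determined by the chosen vertices us = [u_1; ...; u_{s-1}].
   dstates us = [script{G}_1; ...; script{G}_s], script{G}_1 = G. *)
Definition dstates (us : seq T) : seq {set T} := setT :: scanl dnext setT us.

Definition is_dseq (us : seq T) : bool :=
  all (fun p => ~~ terminal p.1 && (p.2 \in core p.1)) (zip (dstates us) us) &&
  terminal (last setT (dstates us)).

(* s = size (dstates us) = size us + 1 *)
Definition dlen (us : seq T) : nat := size (dstates us).
Definition dlist (us : seq T) : seq nat :=
  [seq dcore p.1 p.2 | p <- zip (dstates us) us] ++
  [:: dterm (last setT (dstates us))].
Definition mlist (us : seq T) : seq nat := [seq miso X | X <- dstates us].

(* 1-indexed d_j, m_j, y_j, z_i *)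
Definition d_ (us : seq T) (j : nat) : nat := nth 0 (dlist us) j.-1.
Definition m_ (us : seq T) (j : nat) : nat := nth 0 (mlist us) j.-1.
Definition y_ (us : seq T) (j : nat) : int := ((m_ us j)%:Z + 1 - (d_ us j)%:Z)%R.
Definition z_ (us : seq T) (i : nat) : int := (\sum_(2 <= j < i.+1) y_ us j)%R.
Definition d_G (us : seq T) : nat := d_ us 1.
End Graph.

From mathcomp Require Import all_boot all_order all_algebra.
From mathcomp Require Import zify.
Import GRing.Theory Num.Theory.
Set Implicit Arguments. Unset Strict Implicit. Unset Printing Implicit Defensive.

(* Upper bound (a greedy numbering along the d-sequence).  Process the
   sequence G_1, ..., G_s from the left, keeping a counter lo of numbers
   already used.  At step i, the d_i neighbours of u_i in G_i receive the
   next d_i numbers; the graph G_{i+1} is numbered recursively starting at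
   lo + d_i; then u_i and finally the m_i isolated vertices of G_i get the
   largest remaining numbers.  An edge of G_i then either meets a neighbour
   of u_i (sum of labels at most 2lo + 2d_i + |G_{i+1}| + 1) or lies inside
   G_{i+1}; the terminal graph m K_1 + K_r is numbered in any order.  The
   arithmetic conditions collected along the way (predicate [greedy_ok]) are
   exactly  z_i(G) >= 0  once the bound B = p + d_G and m_1 = 0 are fixed.

   Lower bound (pigeonhole).  The vertex numbered p has at least delta
   neighbours carrying distinct numbers, so one of them has number at least
   delta, and this edge has weight at least p + delta. *)

Section Labellings.
Variable T : finType.

Definition block_labelling (A : {set T}) (lo : nat) (g : T -> nat) :=
  {in A &, injective g} /\ {in A, forall v, lo < g v <= lo + #|A|}.

Lemma block_labelling_exists (A : {set T}) lo : exists g, block_labelling A lo g.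
Proof.
exists (fun v => lo + (index v (enum A)).+1); split.
- move=> x y xA yA /= /eqP; rewrite eqn_add2l eqSS => /eqP eq_index.
  by rewrite -(nth_index x (_ : x \in enum A)) ?mem_enum // eq_index nth_index ?mem_enum.
- move=> v vA; rewrite cardE.
  have : index v (enum A) < size (enum A) by rewrite index_mem mem_enum.
  lia.
Qed.

Lemma block_labelling_set1 u lo : block_labelling [set u] lo (fun=> lo.+1).
Proof.
split; first by move=> x y; rewrite !inE => /eqP -> /eqP ->.
by move=> v _; rewrite cards1; lia.
Qed.

Lemma cardsU_disjoint (A C : {set T}) :
  [disjoint A & C] -> #|A :|: C| = #|A| + #|C|.
Proof. by move=> dAC; rewrite cardsU (disjoint_setI0 dAC) cards0 subn0. Qed.

Lemma block_labelling_union (A C : {set T}) lo (gA gC : T -> nat) :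
  [disjoint A & C] -> block_labelling A lo gA ->
  block_labelling C (lo + #|A|) gC ->
  block_labelling (A :|: C) lo (fun v => if v \in A then gA v else gC v).
Proof.
move=> dAC [injA rgA] [injC rgC].
have notA v : v \in C -> (v \in A) = false by move=> vC; exact: disjointFl dAC vC.
split; last first.
  move=> v; rewrite inE cardsU_disjoint // => /orP[vA|vC].
    by rewrite vA; move: (rgA _ vA); lia.
  by rewrite notA //; move: (rgC _ vC); lia.
move=> x y; rewrite !inE => /orP[xA|xC] /orP[yA|yC].
- by rewrite xA yA; exact: injA.
- by rewrite xA notA // => gxy; move: (rgA _ xA) (rgC _ yC); lia.
- by rewrite yA notA // => gxy; move: (rgA _ yA) (rgC _ xC); lia.
- by rewrite !notA //; exact: injC.
Qed.

Lemma exists_large_label (A : {set T}) (g : T -> nat) :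
  {in A &, injective g} -> 0 < #|A| -> exists2 w, w \in A & #|A| <= (g w).+1.
Proof.
move=> injg A_gt0; apply/exists_inP; apply: contraT => /exists_inPn small.
have uniq_labels : uniq [seq g w | w <- enum A].
  by rewrite map_inj_in_uniq ?enum_uniq // => x y; rewrite !mem_enum; exact: injg.
have sub : {subset [seq g w | w <- enum A] <= iota 0 #|A|.-1}.
  move=> n /mapP[w]; rewrite mem_enum => wA ->.
  by rewrite mem_iota add0n; move: (small w wA); lia.
by move: (uniq_leq_size uniq_labels sub); rewrite size_iota size_map -cardE; lia.
Qed.

End Labellings.

Section GreedyNumbering.
Variable T : finType.
Variable e : rel T.
Hypothesis esym : symmetric e.
Hypothesis eirr : irreflexive e.

Definition edge_bounded (S : {set T}) (g : T -> nat) (B : nat) :=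
  {in S &, forall v w, e v w -> g v + g w <= B}.

Definition nbhd (S : {set T}) (u : T) : {set T} := [set w in core e S | e u w].

Lemma in_core (S : {set T}) v : (v \in core e S) = (v \notin iso e S) && (v \in S).
Proof. by rewrite /core in_setD. Qed.

Lemma iso_subset (S : {set T}) : iso e S \subset S.
Proof. by apply/subsetP => v; rewrite inE => /andP[]. Qed.

Lemma edge_in_core (S : {set T}) v w :
  v \in S -> w \in S -> e v w -> v \in core e S.
Proof.
move=> vS wS evw; rewrite in_core vS andbT; apply/negP; rewrite inE.
by case/andP=> _ /forall_inP/(_ w wS); rewrite evw.
Qed.

Lemma core_iso_partition (S : {set T}) :
  core e S :|: iso e S = S /\ [disjoint core e S & iso e S].
Proof.
split; last by rewrite -setI_eq0 /core setDE -setIA (setIC _ (iso e S)) setICr setI0.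
apply/setP => v; rewrite in_setU in_core.
by case: (boolP (v \in iso e S)) => vI /=; rewrite ?orbF ?(subsetP (iso_subset S) v vI).
Qed.

Lemma card_core (S : {set T}) : #|S| = #|core e S| + miso e S.
Proof.
by have [cover disj] := core_iso_partition S; rewrite -{1}cover cardsU_disjoint.
Qed.

Lemma in_dnext (S : {set T}) u v :
  (v \in dnext e S u) = [&& v != u, v \notin nbhd S u & v \in core e S].
Proof. by rewrite /dnext in_setD in_setU1 negb_or andbA. Qed.

Lemma core_step_partition (S : {set T}) u : u \in core e S ->
  [/\ core e S = nbhd S u :|: (dnext e S u :|: [set u]),
      [disjoint dnext e S u & [set u]] &
      [disjoint nbhd S u & dnext e S u :|: [set u]]].
Proof.
have nbhdE v : (v \in nbhd S u) = (v \in core e S) && e u v by rewrite inE.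
move=> uc; split.
- apply/setP => v; rewrite !in_setU in_set1 in_dnext nbhdE.
  case: eqVneq => [->|_] /=; first by rewrite uc !orbT.
  by case: (v \in core e S); case: (e u v).
- by rewrite disjoint_sym disjoints1 in_dnext eqxx.
- rewrite -setI_eq0; apply/eqP/setP => v.
  rewrite in_set0 in_setI !in_setU in_set1 in_dnext nbhdE.
  case: eqVneq => [->|_] /=; first by rewrite eirr andbF.
  by case: (v \in core e S); case: (e u v).
Qed.

Lemma card_core_step (S : {set T}) u : u \in core e S ->
  #|core e S| = dcore e S u + #|dnext e S u| + 1.
Proof.
case/core_step_partition => -> d1 d2.
by rewrite !cardsU_disjoint // cards1 addnA.
Qed.

(* Isolated vertices carry no edge, so they can take the top numbers. *)
Lemma label_isolated (S : {set T}) lo B g :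
  block_labelling (core e S) lo g -> edge_bounded (core e S) g B ->
  exists g', block_labelling S lo g' /\ edge_bounded S g' B.
Proof.
move=> lab_core bnd_core.
have [gI lab_iso] := block_labelling_exists (iso e S) (lo + #|core e S|).
have [cover disj] := core_iso_partition S.
have := block_labelling_union disj lab_core lab_iso; rewrite cover => lab.
exists (fun v => if v \in core e S then g v else gI v); split => // v w vS wS evw.
have vc := edge_in_core vS wS evw.
have wc : w \in core e S by apply: edge_in_core wS vS _; rewrite esym.
by rewrite vc wc; exact: bnd_core.
Qed.

(* The arithmetic conditions under which the greedy numbering of G[S]
   along the vertex choices [us], using numbers above [lo], has all edge
   weights at most [B]. *)
Fixpoint greedy_ok (S : {set T}) (us : seq T) (lo B : nat) : Prop :=
  match us with
  | [::] => core e S = set0 \/ 2 * lo + 2 * #|core e S| <= B.+1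
  | u :: us' =>
      [/\ u \in core e S,
          2 * lo + 2 * dcore e S u + #|dnext e S u| + 1 <= B
        & greedy_ok (dnext e S u) us' (lo + dcore e S u) B]
  end.

(* The terminal graph: any numbering of its non-isolated part works, since
   every edge weight is at most 2lo + 2|core| - 1. *)
Lemma label_terminal (S : {set T}) lo B :
  core e S = set0 \/ 2 * lo + 2 * #|core e S| <= B.+1 ->
  exists g, block_labelling S lo g /\ edge_bounded S g B.
Proof.
move=> small; have [g [injg rg]] := block_labelling_exists (core e S) lo.
apply: (label_isolated (g := g)) => // v w vc wc evw.
case: small => [c0|small]; first by rewrite c0 inE in vc.
have vw : v != w by apply: contraTneq evw => ->; rewrite eirr.
have ne : g v != g w by apply: contraNneq vw => /injg ->.
by move: (rg _ vc) (rg _ wc) ne => /andP[? ?] /andP[? ?] /eqP; lia.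
Qed.

Lemma label_step (S : {set T}) u lo B g' :
  u \in core e S -> 2 * lo + 2 * dcore e S u + #|dnext e S u| + 1 <= B ->
  block_labelling (dnext e S u) (lo + dcore e S u) g' ->
  edge_bounded (dnext e S u) g' B ->
  exists g, block_labelling S lo g /\ edge_bounded S g B.
Proof.
move=> uc bound lab' bnd'.
have [cover disj_u disj_N] := core_step_partition uc.
have [gN labN] := block_labelling_exists (nbhd S u) lo.
have lab_rest := block_labelling_union disj_u lab' (block_labelling_set1 u _).
have := block_labelling_union disj_N labN lab_rest; rewrite -cover => lab.
apply: (label_isolated lab) => v w vc wc evw /=.
have [_ rg] := lab; have [_ rgN] := labN.
move: (rg v vc) (rg w wc); rewrite (card_core_step uc) => /andP[_ gv] /andP[_ gw].
have dN : dcore e S u = #|nbhd S u| by [].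
case vN: (v \in nbhd S u); first by move: (rgN v vN) gw => /andP[_]; lia.
case wN: (w \in nbhd S u); first by move: (rgN w wN) gv => /andP[_]; lia.
have not_u x y : y \in core e S -> y \notin nbhd S u -> e x y -> x != u.
  by move=> yc yN exy; apply: contraNneq yN => xu; rewrite inE -xu exy yc.
have vS' : v \in dnext e S u by rewrite in_dnext (not_u v w) ?vN ?wN.
have wS' : w \in dnext e S u by rewrite in_dnext (not_u w v) ?vN ?wN // esym.
by rewrite /= vS' wS'; exact: bnd'.
Qed.

Lemma greedy_labelling us : forall (S : {set T}) lo B, greedy_ok S us lo B ->
  exists g, block_labelling S lo g /\ edge_bounded S g B.
Proof.
elim: us => [|u us IH] S lo B /=; first exact: label_terminal.
case=> uc bound /IH[g' [lab' bnd']]; exact: label_step lab' bnd'.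
Qed.

(* The d-sequence started from an arbitrary induced subgraph G[S];
   [states setT us] is [dstates e us] and [y_from setT us j] is y_{j+1}. *)
Definition states (S : {set T}) (us : seq T) : seq {set T} :=
  S :: scanl (dnext e) S us.

Definition y_from (S : {set T}) (us : seq T) (j : nat) : int :=
  let st := states S us in
  let ms := [seq miso e X | X <- st] in
  let ds := [seq dcore e p.1 p.2 | p <- zip st us] ++ [:: dterm e (last S st)] in
  ((nth 0 ms j)%:Z + 1 - (nth 0 ds j)%:Z)%R.

(* The part of "is a d-sequence" used by the greedy numbering. *)
Fixpoint dseq_from (S : {set T}) (us : seq T) : bool :=
  match us with
  | [::] => terminal e S
  | u :: us' => (u \in core e S) && dseq_from (dnext e S u) us'
  end.

Lemma dseq_from_states us (S : {set T}) :
  all (fun p => ~~ terminal e p.1 && (p.2 \in core e p.1)) (zip (states S us) us)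
  && terminal e (last S (states S us)) -> dseq_from S us.
Proof.
elim: us S => [|u us IH] S //=.
by case/andP=> /andP[/andP[_ ->] steps] last_term; apply: IH; rewrite steps.
Qed.

(* If the partial sums of  B - 2lo - |S| + y_1 + ... + y_k  stay positive,
   the greedy numbering is feasible: this quantity is the slack of the
   current step's inequality, and it is invariant when passing to G_{i+1}. *)
Lemma greedy_ok_of_slack us : forall (S : {set T}) lo B, dseq_from S us ->
  (forall k, 0 < k <= (size us).+1 ->
     (1 <= B%:Z - (2 * lo + #|S|)%N%:Z + \sum_(0 <= j < k) y_from S us j)%R) ->
  greedy_ok S us lo B.
Proof.
elim: us => [|u us IH] S lo B /=.
  move=> term /(_ 1 isT); rewrite big_nat1 /y_from /= card_core => slack.
  case/orP: term => [/andP[_ /eqP]|/andP[core_ge2 _]]; first by left.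
  right; move: slack; rewrite /dterm; case: ifP => [/andP[_ /eqP c0]|_].
    by move: core_ge2; rewrite c0 cards0.
  lia.
case/andP=> uc valid slack; have card_S := card_core S.
rewrite (card_core_step uc) in card_S.
have := slack 1 isT; rewrite big_nat1 /y_from /= => slack1.
split=> //; first lia.
apply: IH => // k /andP[k_gt0 k_le].
have := slack k.+1 k_le; rewrite big_nat_recl //.
have shift j : y_from S (u :: us) j.+1 = y_from (dnext e S u) us j by [].
under eq_bigr do rewrite shift.
rewrite /y_from /=; lia.
Qed.

End GreedyNumbering.

Section Strength.
Variable T : finType.
Variable e : rel T.

Lemma min_degree_le v : min_degree e <= deg_in e setT v.
Proof. by rewrite /min_degree -minEnat -leEnat; exact: Order.TotalTheory.bigmin_le. Qed.

Lemma miso_setT : 0 < min_degree e -> miso e setT = 0.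
Proof.
move=> delta_gt0; apply/eqP; rewrite cards_eq0; apply/eqP/setP => v.
have /card_gt0P[w] : 0 < deg_in e setT v := leq_trans delta_gt0 (min_degree_le v).
rewrite !inE /= => evw; apply/negbTE; rewrite negb_forall; apply/existsP.
by exists w; rewrite in_setT evw.
Qed.

Lemma str_le_strength (f : {ffun T -> 'I_#|T|}) :
  is_numbering f -> str e <= strength_of e f.
Proof.
move=> num_f; rewrite /str; case: ex_minnP => n _ minimal; apply: minimal.
by apply/existsP; exists f; rewrite num_f eqxx.
Qed.

Lemma str_le_of_labelling (g : T -> nat) B :
  block_labelling setT 0 g -> edge_bounded e setT g B -> str e <= B.
Proof.
move=> [injg rg] bnd; rewrite cardsT in rg.
have lt_p v : (g v).-1 < #|T| by move: (rg v (in_setT v)); lia.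
pose f : {ffun T -> 'I_#|T|} := [ffun v => Ordinal (lt_p v)].
have fE v : (f v).+1 = g v by rewrite ffunE /=; move: (rg v (in_setT v)); lia.
apply: leq_trans (str_le_strength (f := f) _) _.
  apply/injectiveP => x y /(congr1 (fun i : 'I__ => (i : nat).+1)).
  by rewrite !fE => /injg; apply; exact: in_setT.
apply/bigmax_leqP => u _; apply/bigmax_leqP => v euv; rewrite !fE.
exact: bnd (in_setT u) (in_setT v) euv.
Qed.

(* The vertex numbered p has a neighbour numbered at least delta. *)
Lemma strength_ge (f : {ffun T -> 'I_#|T|}) :
  0 < min_degree e -> is_numbering f -> #|T| + min_degree e <= strength_of e f.
Proof.
move=> delta_gt0 /injectiveP injf.
have delta_le_p : min_degree e <= #|T|.
  by rewrite /min_degree -minEnat -leEnat; exact: Order.TotalTheory.bigmin_le_id.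
have top_lt : #|T|.-1 < #|T| by lia.
have /codomP[x fx] : Ordinal top_lt \in codom f.
  by apply: (inj_card_onto injf); rewrite card_ord.
set A := [set w in setT | e x w].
have A_ge : min_degree e <= #|A| by exact: min_degree_le.
have injA : {in A &, injective (fun w => nat_of_ord (f w))}.
  by move=> v w _ _ /val_inj /injf.
have [|w] := exists_large_label injA; first lia.
rewrite inE => /andP[_ exw] large.
rewrite /strength_of; apply: leq_trans (leq_bigmax_cond x isT).
apply: leq_trans (leq_bigmax_cond w exw).
have fx_top : nat_of_ord (f x) = #|T|.-1 by rewrite -fx.
rewrite fx_top prednK; lia.
Qed.

Lemma str_ge : 0 < min_degree e -> #|T| + min_degree e <= str e.
Proof.
move=> delta_gt0; rewrite /str; case: ex_minnP => n /existsP[f /andP[num_f /eqP <-]] _.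
exact: strength_ge.
Qed.

End Strength.

(* For G itself (S = V, lo = 0, B = p + d_G, m_1 = 0) the slack condition
   of [greedy_ok_of_slack] is exactly  z_k(G) >= 0. *)
Lemma greedy_ok_of_z (T : finType) (e : rel T) (us : seq T) :
  irreflexive e -> 0 < min_degree e -> dseq_from e setT us ->
  (forall i, 2 <= i <= dlen e us -> (0 <= z_ e us i)%R) ->
  greedy_ok e setT us 0 (#|T| + d_G e us).
Proof.
move=> eirr delta_gt0 valid z_ge0.
apply: greedy_ok_of_slack => // k /andP[k_gt0 k_le].
have y_1 : y_from e setT us 0 = ((miso e setT)%:Z + 1 - (d_G e us)%:Z)%R by [].
rewrite big_ltn // y_1 miso_setT // cardsT.
case: (ltnP 1 k) => [k_gt1|k_le1]; last by rewrite big_geq //; lia.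
have z_k : z_ e us k = (\sum_(1 <= j < k) y_from e setT us j)%R.
  by rewrite /z_ big_add1.
have dlen_us : dlen e us = (size us).+1 by rewrite /dlen /= size_scanl.
have := z_ge0 k; rewrite k_gt1 dlen_us z_k => /(_ k_le) z_k_ge0.
(* abstract the partial sum so that [lia] treats it as an integer atom *)
move: z_k_ge0; set X := (\sum_(1 <= j < k) _)%R; clearbody X; lia.
Qed.

Theorem mainTheorem5 (T : finType) (e : rel T) :
  simple_graph e ->
  1 <= min_degree e <= #|T| - 2 ->
  forall us : seq T,
    is_dseq e us ->
    (forall i, 2 <= i <= dlen e us -> (0 <= z_ e us i)%R) ->
    str e <= #|T| + d_G e us /\
    (d_G e us = min_degree e -> str e = #|T| + d_G e us).
Proof.
move=> [esym eirr] /andP[delta_gt0 _] us is_dseq_us z_ge0.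
have valid : dseq_from e setT us by exact: dseq_from_states.
have [g [lab bnd]] := greedy_labelling esym eirr (greedy_ok_of_z eirr delta_gt0 valid z_ge0).
have upper := str_le_of_labelling lab bnd.
split=> // dG_eq; apply/eqP; rewrite eqn_leq upper /=.
by rewrite dG_eq; exact: str_ge.
Qed.
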